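(* Let $G$ be a group acting linearly and isometrically on a real Hilbert space $M$. Let $X=t_0+\sigma\epsilon$ with $t_0\neq0$, $\sigma>0$, $\mathbb{E}(\epsilon)=0$ and $\mathbb{E}(\|X\|^2)<+\infty$. Suppose $[t_0]$ is a $C^1$ submanifold of $M$ with tangent space $T_{t_0}[t_0]$ at $t_0$. Then $\mathbb{P}(X\notin T_{t_0}[t_0]^\perp)>0$ if and only if $\mathbb{P}(\epsilon\notin T_{t_0}[t_0]^\perp)>0$, and if these hold, $[t_0]$ is not a Fréchet mean of $[X]$.
   Context: $M$ is a real Hilbert space with inner product $\langle\cdot,\cdot\rangle$ and norm $\|\cdot\|$; the action is linear and isometric ($\|g\cdot x\|=\|x\|$). $[m]=\{g\cdot m:g\in G\}$. $T_{t_0}[t_0]$ is the (linear) tangent space and $T_{t_0}[t_0]^\perp$ its orthogonal complement. $F(m)=\mathbb{E}\big(\inf_{g}\|g\cdot X-m\|^2\big)$ and $[m_\star]$ is a Fréchet mean of $[X]$ if $m_\star$ globally minimises $F$. *)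

From HB Require Import structures.
From mathcomp Require Import all_boot all_order all_algebra.
From mathcomp Require Import all_classical all_reals all_analysis.
Set Implicit Arguments. Unset Strict Implicit. Unset Printing Implicit Defensive.
Import Order.TTheory GRing.Theory Num.Theory.
Import numFieldNormedType.Exports.
Local Open Scope classical_set_scope.
Local Open Scope ring_scope.

Section defs.
Variables (R : realType) (M : completeNormedModType R).

(** [ip] is a (real) inner product on [M] inducing the norm of [M];
    together with completeness of [M] this makes [M] a real Hilbert space. *)
Definition is_inner_product (ip : M -> M -> R) : Prop :=
  [/\ forall (a : R) (x y z : M), ip (a *: x + y) z = a * ip x z + ip y z,
      forall x y, ip x y = ip y x &
      forall x, ip x x = `|x| ^+ 2].

Definition linear_isometric_group_action (G : Type) (mul : G -> G -> G)
    (one : G) (inv : G -> G) (act : G -> M -> M) : Prop :=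
  [/\ (forall g h k, mul g (mul h k) = mul (mul g h) k),
      (forall g, mul one g = g) &
      (forall g, mul (inv g) g = one)] /\
  [/\ (forall x, act one x = x),
      (forall g h x, act (mul g h) x = act g (act h x)),
      (forall g (a : R) x y, act g (a *: x + y) = a *: act g x + act g y) &
      (forall g x, `|act g x| = `|x|)].

Definition group_orbit (G : Type) (act : G -> M -> M) (m : M) : set M :=
  range (fun g => act g m).

Definition closed_subspace (E : set M) : Prop :=
  [/\ E 0, (forall (a : R) x y, E x -> E y -> E (a *: x + y)) & closed E].

Definition C1_on (f : M -> M) (U : set M) : Prop :=
  (forall x, U x -> differentiable f x) /\
  (forall x, U x -> forall e : R, 0 < e -> exists2 d : R, 0 < d &
     forall y, U y -> `|y - x| < d -> forall h, `|'d f y h - 'd f x h| <= e * `|h|).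

Definition submanifold_chart (S : set M) (p : M) (U : set M) (phi : M -> M)
    (E : set M) : Prop :=
  [/\ open U, U p & open (phi @` U)] /\
  [/\ C1_on phi U,
      (exists psi : M -> M, [/\ C1_on psi (phi @` U),
          (forall x, U x -> psi (phi x) = x) &
          (forall y, (phi @` U) y -> phi (psi y) = y)]),
      closed_subspace E &
      phi @` (U `&` S) = phi @` U `&` E].

Definition C1_submanifold (S : set M) : Prop :=
  forall p, S p -> exists U phi E, submanifold_chart S p U phi E.

Definition tangent_space (S : set M) (p : M) (T : set M) : Prop :=
  exists U phi E, submanifold_chart S p U phi E /\
    T = [set v | E ('d phi p v)].

Definition orth (ip : M -> M -> R) (T : set M) : set M :=
  [set x | forall v, T v -> ip x v = 0].

Definition borel_measurable d (Omega : measurableType d) (f : Omega -> M) : Prop :=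
  forall B : set M, (open : set (set M)).-sigma.-measurable B ->
    measurable (f @^-1` B).

Definition frechet_fun d (Omega : measurableType d) (P : probability Omega R)
    (G : Type) (act : G -> M -> M) (X : Omega -> M) (m : M) : \bar R :=
  (\int[P]_w (inf (range (fun g => `|act g (X w) - m| ^+ 2)))%:E)%E.

Definition is_frechet_mean d (Omega : measurableType d) (P : probability Omega R)
    (G : Type) (act : G -> M -> M) (X : Omega -> M) (m : M) : Prop :=
  forall m', (frechet_fun P act X m <= frechet_fun P act X m')%E.

End defs.

(* For l >= 0, expanding the square gives
     F(l t0) = E|X|^2 + l^2 |t0|^2 - 2 l E h(X),   where h(x) = sup_g <g x, t0>,
   a quadratic in l minimised at l = E h(X) / |t0|^2.  Hence [t0] can only be a
   Fréchet mean if E h(X) = |t0|^2, and |t0|^2 = E <X, t0> because E eps = 0.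
   But h(x) >= <x, t0>, strictly when <x, v> != 0 for some tangent vector v:
   moving t0 along the orbit in the direction of v raises <x, g t0> at first
   order.  The same argument at x = t0 shows that t0 is orthogonal to the
   tangent space (the orbit lies on a sphere), so X and eps are orthogonal to
   it simultaneously. *)

From HB Require Import structures.
From mathcomp Require Import all_boot all_order all_algebra.
From mathcomp Require Import all_classical all_reals all_analysis.
From mathcomp Require Import lra measurable_realfun.
Import Order.TTheory GRing.Theory Num.Theory.
Import numFieldNormedType.Exports.
Local Open Scope classical_set_scope.
Local Open Scope ring_scope.
Set Implicit Arguments. Unset Strict Implicit. Unset Printing Implicit Defensive.

Lemma lipschitz_continuous (R : realType) (M : normedModType R) (f : M -> R) (k : R) :
  0 <= k -> (forall x y, `|f x - f y| <= k * `|x - y|) -> continuous f.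
Proof.
move=> k0 fk x; apply/cvgrPdist_le => e e0.
have k1 : 0 < k + 1 by rewrite ltr_wpDl.
apply/nbhs_normP; exists (e / (k + 1)); first by rewrite /= divr_gt0.
move=> y /= xy; apply: le_trans (fk x y) _.
apply: le_trans (_ : k * (e / (k + 1)) <= e); first by rewrite ler_wpM2l // ltW.
by rewrite mulrA ler_pdivrMr //; nra.
Qed.

Section InnerProduct.
Variables (R : realType) (M : completeNormedModType R) (ip : M -> M -> R).
Hypothesis ipP : is_inner_product ip.

Lemma ipDZl a x y z : ip (a *: x + y) z = a * ip x z + ip y z.
Proof. by case: ipP. Qed.

Lemma ipC x y : ip x y = ip y x.
Proof. by case: ipP. Qed.

Lemma ip_sqr_norm x : ip x x = `|x| ^+ 2.
Proof. by case: ipP. Qed.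

Lemma ipDl x y z : ip (x + y) z = ip x z + ip y z.
Proof. by have := ipDZl 1 x y z; rewrite scale1r mul1r. Qed.

Lemma ip0l z : ip 0 z = 0.
Proof. by have := ipDl 0 0 z; rewrite addr0; lra. Qed.

Lemma ipZl a x z : ip (a *: x) z = a * ip x z.
Proof. by rewrite -[a *: x]addr0 ipDZl ip0l addr0. Qed.

Lemma ipBl x y z : ip (x - y) z = ip x z - ip y z.
Proof. by rewrite ipDl -scaleN1r ipZl mulN1r. Qed.

Lemma ipDr x y z : ip z (x + y) = ip z x + ip z y.
Proof. by rewrite ipC ipDl !(ipC z). Qed.

Lemma ipZr a x z : ip z (a *: x) = a * ip z x.
Proof. by rewrite ipC ipZl ipC. Qed.

Lemma ipBr x y z : ip z (x - y) = ip z x - ip z y.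
Proof. by rewrite ipC ipBl !(ipC z). Qed.

Lemma normD_sqr x y : `|x + y| ^+ 2 = `|x| ^+ 2 + 2 * ip x y + `|y| ^+ 2.
Proof. by rewrite -!ip_sqr_norm ipDl !ipDr (ipC y x); lra. Qed.

Lemma normB_sqr x y : `|x - y| ^+ 2 = `|x| ^+ 2 - 2 * ip x y + `|y| ^+ 2.
Proof. by rewrite -!ip_sqr_norm ipBl !ipBr (ipC y x); lra. Qed.

Lemma ip_norm_le x y : `|ip x y| <= `|x| * `|y|.
Proof.
have [->|x0] := eqVneq x 0; first by rewrite ip0l !normr0 mul0r.
have [->|y0] := eqVneq y 0; first by rewrite ipC ip0l !normr0 mulr0.
have [nx ny] : 0 < `|x| /\ 0 < `|y| by rewrite !normr_gt0.
pose u := `|x|^-1 *: x; pose w := `|y|^-1 *: y.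
have unit_norm (z : M) : 0 < `|z| -> `|(`|z|^-1 *: z)| = 1.
  by move=> z0; rewrite normrZ normfV normr_id mulVf ?gt_eqF.
have : `|ip u w| <= 1.
  have := normD_sqr u w; have := normB_sqr u w; rewrite !unit_norm //.
  have := sqr_ge0 `|u + w|; have := sqr_ge0 `|u - w|.
  by rewrite ler_norml; move=> *; apply/andP; split; lra.
rewrite ipZl ipZr !normrM !normfV !normr_id mulrA -invfM.
by rewrite ler_pdivrMl ?mulr_gt0 // mulr1.
Qed.

Lemma continuous_ip v : continuous (fun x => ip x v).
Proof.
apply: (lipschitz_continuous (k := `|v|)) => // x y.
by rewrite -ipBl mulrC ip_norm_le.
Qed.
End InnerProduct.

Lemma sup_range_affine (R : realType) (G : Type) (g0 : G) (a : G -> R) (B al be : R) :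
  (forall g, a g <= B) -> 0 <= al ->
  sup (range (fun g => al * a g + be)) = al * sup (range a) + be.
Proof.
move=> aB al0.
have supa : has_sup (range a) by split; [exists (a g0), g0 | exists B => _ [g _ <-]].
apply/le_anti/andP; split.
  apply: ge_sup; first by exists (al * a g0 + be), g0.
  move=> _ [g _ <-]; rewrite lerD2r ler_wpM2l //.
  by apply: sup_upper_bound => //; exists g.
have supa' : has_sup (range (fun g => al * a g + be)).
  split; first by exists (al * a g0 + be), g0.
  by exists (al * B + be) => _ [g _ <-]; rewrite lerD2r ler_wpM2l.
have [al0'|al_gt0] := eqVneq al 0.
  by apply: (sup_upper_bound supa'); exists g0; rewrite // al0' !mul0r.
have {al0 al_gt0} al_gt0 : 0 < al by rewrite lt_def al_gt0.
rewrite -lerBrDr -ler_pdivlMl //; apply: ge_sup; first by exists (a g0), g0.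
move=> _ [g _ <-]; rewrite ler_pdivlMl // lerBrDr.
by apply: sup_upper_bound => //; exists g.
Qed.

Section Action.
Variables (R : realType) (M : completeNormedModType R) (ip : M -> M -> R).
Hypothesis ipP : is_inner_product ip.
Variables (G : Type) (mul : G -> G -> G) (one : G) (inv : G -> G) (act : G -> M -> M).
Hypothesis actP : linear_isometric_group_action mul one inv act.

Lemma act1 x : act one x = x.
Proof. by case: actP => _ []. Qed.

Lemma actK g x : act (inv g) (act g x) = x.
Proof. by case: actP => -[_ _ mulVg] [_ actM _ _]; rewrite -actM mulVg act1. Qed.

Lemma actD g x y : act g (x + y) = act g x + act g y.
Proof. by case: actP => _ [_ _ actDZ _]; rewrite -[x]scale1r actDZ !scale1r. Qed.

Lemma act_norm g x : `|act g x| = `|x|.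
Proof. by case: actP => _ []. Qed.

Lemma act_ip g x y : ip (act g x) (act g y) = ip x y.
Proof.
have := normD_sqr ipP (act g x) (act g y).
by rewrite -actD !act_norm (normD_sqr ipP); lra.
Qed.

Variable t0 : M.

Definition orbit_support x := sup (range (fun g => ip (act g x) t0)).

Lemma ip_act_le g x : ip (act g x) t0 <= `|x| * `|t0|.
Proof. by rewrite -(act_norm g x); apply: le_trans (ler_norm _) (ip_norm_le ipP _ _). Qed.

Lemma ip_act_le_orbit_support g x : ip (act g x) t0 <= orbit_support x.
Proof.
apply: sup_upper_bound; last by exists g.
by split; [exists (ip (act g x) t0), g | exists (`|x| * `|t0|) => _ [h _ <-]; exact: ip_act_le].
Qed.

Lemma ip_le_orbit_support x : ip x t0 <= orbit_support x.
Proof. by have := ip_act_le_orbit_support one x; rewrite act1. Qed.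

Lemma orbit_support_le x y : orbit_support x <= orbit_support y + `|x - y| * `|t0|.
Proof.
apply: ge_sup; first by exists (ip (act one x) t0), one.
move=> _ [g _ <-]; have -> : act g x = act g y + act g (x - y) by rewrite -actD addrC subrK.
rewrite (ipDl ipP).
by apply: lerD; [exact: ip_act_le_orbit_support | exact: ip_act_le].
Qed.

Lemma norm_orbit_support_le x : `|orbit_support x| <= `|x| * `|t0|.
Proof.
have := ip_norm_le ipP x t0; rewrite !ler_norml => /andP[lb _].
rewrite (le_trans lb (ip_le_orbit_support x)) /=.
by apply: ge_sup; [exists (ip (act one x) t0), one | move=> _ [g _ <-]; exact: ip_act_le].
Qed.

Lemma inf_orbit_dist (l : R) x : 0 <= l ->
  inf (range (fun g => `|act g x - l *: t0| ^+ 2)) =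
  `|x| ^+ 2 + l ^+ 2 * `|t0| ^+ 2 - 2 * l * orbit_support x.
Proof.
move=> l0; rewrite /inf.
have -> : -%R @` range (fun g => `|act g x - l *: t0| ^+ 2) =
    range (fun g => 2 * l * ip (act g x) t0 - (`|x| ^+ 2 + l ^+ 2 * `|t0| ^+ 2)).
  have expand g : - `|act g x - l *: t0| ^+ 2 =
      2 * l * ip (act g x) t0 - (`|x| ^+ 2 + l ^+ 2 * `|t0| ^+ 2).
    rewrite (normB_sqr ipP) act_norm normrZ exprMn (ipZr ipP) ger0_norm //; lra.
  apply/seteqP; split => [_ [_ [g _ <-] <-]|_ [g _ <-]]; first by exists g.
  by exists (`|act g x - l *: t0| ^+ 2); [exists g|].
rewrite (sup_range_affine one (B := `|x| * `|t0|)) ?mulr_ge0 // -/(orbit_support x); first lra.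
by move=> g; exact: ip_act_le.
Qed.
End Action.

Section Differential.
Variables (R : realType) (M : completeNormedModType R).

Lemma diff_left_inverse (f g : M -> M) (U : set M) x v :
  open U -> U x -> (forall y, U y -> g (f y) = y) ->
  differentiable f x -> differentiable g (f x) -> 'd g (f x) ('d f x v) = v.
Proof.
move=> oU Ux gfU df dg.
have gf_id : \forall y \near x, (g \o f) y = id y.
  have : nbhs x U by apply: open_nbhs_nbhs; split.
  by apply: filterS => y Uy /=; exact: gfU.
have := near_eq_derive v gf_id.
rewrite derive_id deriveE; last exact: differentiable_comp.
by rewrite diff_comp.
Qed.

Lemma diff_line_approx (f : M -> M) y e (eta : R) :
  differentiable f y -> 0 < eta ->
  \forall h \near 0^', `|f (h *: e + y) - f y - h *: 'd f y e| <= eta * `|h|.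
Proof.
move=> df eta0.
have : (fun h : R => h^-1 *: ((f \o shift y) (h *: e) - f y)) @ 0^' --> 'd f y e.
  by rewrite -deriveE //; exact: diff_derivable.
move/cvgrPdist_lt => /(_ eta eta0); apply: filter_app; near=> h => /ltW.
have h0 : h != 0 by near: h; exact: nbhs_dnbhs_neq.
have -> : f (h *: e + y) - f y - h *: 'd f y e =
    h *: (h^-1 *: ((f \o shift y) (h *: e) - f y) - 'd f y e).
  by rewrite scalerBr scalerA mulfV // scale1r.
by rewrite normrZ mulrC distrC; exact: ler_wpM2r.
Unshelve. all: by end_near. Qed.

Lemma chart_tangent_approx (S : set M) p U phi E v (eta : R) :
  submanifold_chart S p U phi E -> S p -> E ('d phi p v) -> 0 < eta ->
  \forall h \near 0^', exists2 q, S q & `|q - p - h *: v| <= eta * `|h|.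
Proof.
move=> [[oU Up oPU] [[dphi _] [psi [[dpsi _] psiK _]] [_ Elin _] chartE]] Sp Ev eta0.
set y := phi p; set e := 'd phi p v.
have Uy : (phi @` U) y by exists p.
have dpsi_e : 'd psi y e = v.
  by apply: (diff_left_inverse _ oU Up psiK); [exact: dphi | exact: dpsi].
have psi_y : psi y = p by exact: psiK.
have Ey : E y.
  suff : (phi @` U `&` E) y by case.
  by rewrite -chartE; exists p.
have near_dom : \forall h \near 0^', (phi @` U) (h *: e + y).
  apply: nbhs_dnbhs; have : (fun h : R => h *: e + y) @ 0 --> y.
    rewrite -[X in _ --> X]add0r -(scale0r e).
    by apply: cvgD; [exact: cvgZr_tmp cvg_id | exact: cvg_cst].
  by apply; apply: open_nbhs_nbhs; split.
have approx := diff_line_approx e (dpsi y Uy) eta0.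
near=> h.
have [u [Uu Su] phiu] : (phi @` (U `&` S)) (h *: e + y).
  by rewrite chartE; split; [near: h | exact: Elin].
exists u => //; have -> : u = psi (h *: e + y) by rewrite -phiu psiK.
by rewrite -psi_y -dpsi_e; near: h.
Unshelve. all: by end_near. Qed.
End Differential.

Lemma dnbhs0_exists_same_sign (R : realType) (Q : R -> Prop) (r : R) :
  r != 0 -> (\forall h \near 0^', Q h) -> exists2 h, 0 < h * r & Q h.
Proof.
move=> r0 /nbhs_norm0P [d /= d0 Qd]; exists ((d / 2) * Num.sg r).
  by rewrite -(mulrA (d / 2)) -normrEsg mulr_gt0 ?normr_gt0 ?divr_gt0.
apply: Qd; last by rewrite mulf_neq0 ?sgr_eq0 // gt_eqF ?divr_gt0.
by rewrite /= normrM normr_sg r0 mulr1 gtr0_norm ?divr_gt0 //; lra.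
Qed.

Section Tangent.
Variables (R : realType) (M : completeNormedModType R) (ip : M -> M -> R).
Hypothesis ipP : is_inner_product ip.
Variables (G : Type) (mul : G -> G -> G) (one : G) (inv : G -> G) (act : G -> M -> M).
Hypothesis actP : linear_isometric_group_action mul one inv act.
Variables (t0 : M) (T : set M).
Hypothesis tanT : tangent_space (group_orbit act t0) t0 T.

Lemma tangent_orbit_approx v (r eta : R) : T v -> r != 0 -> 0 < eta ->
  exists g s, 0 < s * r /\ `|act g t0 - t0 - s *: v| <= eta * `|s|.
Proof.
case: tanT => U [phi [E [chart ->]]] /= Ev r0 eta0.
have orbit_t0 : group_orbit act t0 t0 by exists one => //; exact: (act1 actP).
have [s sr [_ [g _ <-] approx]] :=
  dnbhs0_exists_same_sign r0 (chart_tangent_approx chart orbit_t0 Ev eta0).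
by exists g, s.
Qed.

Lemma tangent_ip_increase v x : T v -> ip x v != 0 ->
  exists g, ip x t0 < ip x (act g t0).
Proof.
move=> Tv xv0; set a := `|ip x v|.
have a0 : 0 < a by rewrite normr_gt0.
pose eta := a / (`|x| + 1).
have eta0 : 0 < eta by rewrite divr_gt0 // ltr_wpDl.
have x_eta : `|x| * eta < a.
  rewrite mulrC mulrAC ltr_pdivrMr ?ltr_wpDl //.
  by rewrite ltr_pM2l // ltrDl.
have [g [s [sxv approx]]] := tangent_orbit_approx Tv xv0 eta0.
exists g; set w := act g t0 - t0 - s *: v in approx.
have -> : act g t0 = t0 + (s *: v + w) by rewrite /w [s *: v + _]addrC subrK addrC subrK.
clearbody w.
have s0 : 0 < `|s| by rewrite normr_gt0; apply: contraTneq sxv => ->; rewrite mul0r ltxx.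
have sxv_norm : s * ip x v = `|s| * a by rewrite -normrM gtr0_norm.
have xw : - (`|x| * (eta * `|s|)) <= ip x w.
  have := ip_norm_le ipP x w; rewrite ler_norml => /andP[+ _]; apply: le_trans.
  by rewrite lerN2 ler_wpM2l.
have : 0 < `|s| * (a - `|x| * eta) by rewrite mulr_gt0 // subr_gt0.
rewrite !(ipDr ipP) (ipZr ipP) sxv_norm; nra.
Qed.

(* The orbit lies on the sphere of radius |t0|, so <t0, g t0> <= |t0|^2. *)
Lemma tangent_orth_base v : T v -> ip t0 v = 0.
Proof.
move=> Tv; apply: contrapT => /eqP /(tangent_ip_increase Tv) [g].
rewrite (ip_sqr_norm ipP) expr2; apply/negP; rewrite -leNgt.
by rewrite -{2}(act_norm actP g t0); apply: le_trans (ler_norm _) (ip_norm_le ipP _ _).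
Qed.

Lemma ip_lt_orbit_support v x : T v -> ip x v != 0 ->
  ip x t0 < orbit_support ip act t0 x.
Proof.
move=> Tv /(tangent_ip_increase Tv) [g /lt_le_trans]; apply.
rewrite -(act_ip ipP actP (inv g)) (actK actP).
exact: (ip_act_le_orbit_support ipP actP).
Qed.
End Tangent.

Lemma measurable_fun_continuous_comp (R : realType) (M : completeNormedModType R)
    d (Omega : measurableType d) (X : Omega -> M) (f : M -> R) :
  borel_measurable X -> continuous f -> measurable_fun setT (f \o X).
Proof.
move=> mX cf; apply: (measurability _ (RGenInftyO.measurableE R)).
move=> _ [_ [x ->] <-]; rewrite setTI.
have -> : (f \o X) @^-1` `]-oo, x[ = X @^-1` (f @^-1` [set y | y < x]).
  by apply/seteqP; split => w /=; rewrite in_itv.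
apply: mX; apply: sub_sigma_algebra.
by apply: open_comp; [move=> y _; exact: cf | exact: open_lt].
Qed.

Lemma integral_gt0 d (T : measurableType d) (R : realType)
    (mu : {measure set T -> \bar R}) (k : T -> R) (A : set T) :
  measurable A -> measurable_fun setT k -> (forall w, 0 <= k w) ->
  (forall w, A w -> 0 < k w) -> (0 < mu A)%E -> (0 < \int[mu]_w (k w)%:E)%E.
Proof.
move=> mA mk k0 kA muA; rewrite lt0e integral_ge0 ?andbT; last first.
  by move=> w _; rewrite lee_fin.
apply: contraTneq muA => int0.
have [N [mN muN0 notkN]] : ae_eq mu setT (EFin \o k) (cst 0).
  apply/ae_eq_integral_abs => //; first exact/measurable_EFinP.
  by rewrite -int0; apply: eq_integral => w _; rewrite gee0_abs ?lee_fin.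
rewrite ltNge negbK -muN0 le_measure ?inE // => w /kA kw.
by apply: notkN => /= /(_ I) [] /eqP; rewrite gt_eqF.
Qed.

Section ProbabilityRintegral.
Variables (R : realType) (d : measure_display) (Omega : measurableType d)
  (P : probability Omega R).
Local Notation integrable f := (P.-integrable setT (EFin \o f)).

Lemma integrable_cst (c : R) : integrable (fun=> c).
Proof. exact: finite_measure_integrable_cst. Qed.

Lemma integrableZlD (a : R) f g : integrable f -> integrable g ->
  integrable (fun w => a * f w + g w).
Proof.
move=> intf intg; have := integrableD measurableT (integrableZl measurableT a intf) intg.
by apply: eq_integrable => // w _ /=; rewrite EFinD EFinM.
Qed.

Lemma RintegralZlD (a : R) f g : integrable f -> integrable g ->
  \int[P]_w (a * f w + g w) = a * \int[P]_w f w + \int[P]_w g w.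
Proof.
move=> intf intg; rewrite RintegralD //; last first.
  by apply: eq_integrable (integrableZl measurableT a intf) => // w _ /=; rewrite EFinM.
by rewrite RintegralZl.
Qed.

Lemma Rintegral_cst_probability (c : R) : \int[P]_w c = c.
Proof.
rewrite Rintegral_cst // -[RHS]mulr1; congr (_ * _); exact: (congr1 fine (probability_setT P)).
Qed.

Lemma integral_EFin_Rintegral f : integrable f ->
  (\int[P]_w (f w)%:E = (\int[P]_w f w)%:E)%E.
Proof. by move=> intf; rewrite fineK //; exact: integrable_fin_num. Qed.
End ProbabilityRintegral.

Lemma orth_shift (R : realType) (M : completeNormedModType R) (ip : M -> M -> R)
    (T : set M) t0 (sigma : R) e :
  is_inner_product ip -> (forall v, T v -> ip t0 v = 0) -> sigma != 0 ->
  orth ip T (t0 + sigma *: e) = orth ip T e.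
Proof.
move=> ipP t0T s0; rewrite propeqE; split => orth_e v Tv; have := orth_e v Tv;
  rewrite (ipDl ipP) (ipZl ipP) t0T // add0r.
  by move/eqP; rewrite mulf_eq0 (negPf s0) => /eqP.
by move=> ->; rewrite mulr0.
Qed.

Section FrechetFunction.
Variables (R : realType) (M : completeNormedModType R) (ip : M -> M -> R).
Hypothesis ipP : is_inner_product ip.
Variables (G : Type) (mul : G -> G -> G) (one : G) (inv : G -> G) (act : G -> M -> M).
Hypothesis actP : linear_isometric_group_action mul one inv act.
Variables (d : measure_display) (Omega : measurableType d) (P : probability Omega R).
Variables (X : Omega -> M) (t0 : M).
Hypothesis mX : borel_measurable X.
Hypothesis X_L2 : (\int[P]_w (`|X w| ^+ 2)%:E < +oo)%E.

Local Notation integrable f := (P.-integrable setT (EFin \o f)).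
Local Notation support := (orbit_support ip act t0).

Lemma continuous_orbit_support : continuous support.
Proof.
apply: (lipschitz_continuous (k := `|t0|)) => // x y.
have := orbit_support_le ipP actP t0 x y; have := orbit_support_le ipP actP t0 y x.
by rewrite distrC ler_norml mulrC => *; apply/andP; split; lra.
Qed.

Lemma integrable_sqr_norm : integrable (fun w => `|X w| ^+ 2).
Proof.
apply/integrableP; split.
  apply/measurable_EFinP.
  apply: (measurable_fun_continuous_comp (f := (fun r : R => r ^+ 2) \o Num.norm)) => // x.
  by apply: continuous_comp; [exact: norm_continuous | exact: exprn_continuous].
rewrite (eq_integral (fun w => (`|X w| ^+ 2)%:E)) // => w _.
by rewrite gee0_abs // lee_fin sqr_ge0.
Qed.

Lemma integrable_le_norm (f : Omega -> R) : measurable_fun setT f ->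
  (forall w, `|f w| <= `|X w| * `|t0|) -> integrable f.
Proof.
move=> mf fX; have := integrableZlD 1 integrable_sqr_norm (integrable_cst P (`|t0| ^+ 2)).
apply: le_integrable => //; first exact/measurable_EFinP.
move=> w _; rewrite /= lee_fin mul1r [X in _ <= X]ger0_norm ?addr_ge0 ?sqr_ge0 //.
apply: le_trans (fX w) _; have := sqr_ge0 (`|X w| - `|t0|); nra.
Qed.

Lemma integrable_ip : integrable (fun w => ip (X w) t0).
Proof.
apply: integrable_le_norm => [|w]; last exact: ip_norm_le.
exact: measurable_fun_continuous_comp mX (continuous_ip ipP (v := t0)).
Qed.

Lemma integrable_orbit_support : integrable (fun w => support (X w)).
Proof.
apply: integrable_le_norm => [|w]; last exact: (norm_orbit_support_le ipP actP).
exact: measurable_fun_continuous_comp mX continuous_orbit_support.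
Qed.

Lemma frechet_fun_scale (l : R) : 0 <= l ->
  frechet_fun P act X (l *: t0) = (\int[P]_w `|X w| ^+ 2 + l ^+ 2 * `|t0| ^+ 2
                                   - 2 * l * \int[P]_w support (X w))%:E.
Proof.
move=> l0; rewrite /frechet_fun (eq_integral (fun w =>
    (- (2 * l) * support (X w) + (1 * `|X w| ^+ 2 + l ^+ 2 * `|t0| ^+ 2))%:E)); last first.
  by move=> w _; rewrite (inf_orbit_dist ipP actP _ _ l0); congr (_%:E); lra.
have int_sqr := integrableZlD 1 integrable_sqr_norm (integrable_cst P (l ^+ 2 * `|t0| ^+ 2)).
rewrite integral_EFin_Rintegral; last exact: integrableZlD integrable_orbit_support int_sqr.
rewrite !RintegralZlD ?Rintegral_cst_probability //.
- by congr (_%:E); lra.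
- exact: integrable_sqr_norm.
- exact: integrable_cst.
- exact: integrable_orbit_support.
Qed.

Lemma not_frechet_mean_of_lt : t0 != 0 ->
  `|t0| ^+ 2 < \int[P]_w support (X w) -> ~ is_frechet_mean P act X t0.
Proof.
move=> t0_neq0; set c := `|t0| ^+ 2; set H := \int[P]_w support (X w) => cH mean.
have c0 : 0 < c by rewrite exprn_gt0 // normr_gt0.
have H0 : 0 <= H by exact: ltW (lt_trans c0 cH).
have lc : H / c * c = H by rewrite divfK // gt_eqF.
have := mean ((H / c) *: t0); rewrite -{1}[t0]scale1r.
rewrite !frechet_fun_scale ?divr_ge0 ?ler01 ?(ltW c0) //.
by rewrite lee_fin -/c -/H; nra.
Qed.

Lemma measurable_not_orth (T : set M) : measurable [set w | ~ orth ip T (X w)].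
Proof.
have -> : [set w | ~ orth ip T (X w)] = X @^-1` \bigcup_(v in T) [set x | ip x v != 0].
  apply/seteqP; split => w /=.
    by move=> /existsNP [v /not_implyP [Tv /eqP xv]]; exists v.
  by move=> [v Tv /= /eqP xv] /(_ v Tv).
apply: mX; apply: sub_sigma_algebra; apply: bigcup_open => v _.
have -> : [set x | ip x v != 0] = (fun x => ip x v) @^-1` [set r | r != 0] by [].
by apply: open_comp; [move=> x _; exact: continuous_ip | exact: open_neq].
Qed.

Lemma Rintegral_ip_lt_orbit_support (T : set M) :
  tangent_space (group_orbit act t0) t0 T ->
  (0 < P [set w | ~ orth ip T (X w)])%E ->
  \int[P]_w ip (X w) t0 < \int[P]_w support (X w).
Proof.
move=> tanT notorth_pos.
have int_ip := integrable_ip; have int_support := integrable_orbit_support.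
have int_gap : integrable (fun w => support (X w) - ip (X w) t0).
  have := integrableZlD (-1) int_ip int_support.
  by apply: eq_integrable => // w _ /=; rewrite mulN1r addrC.
rewrite -subr_gt0 -RintegralB // -lte_fin -integral_EFin_Rintegral //.
apply: (integral_gt0 (measurable_not_orth T)) => //.
- by case/integrableP: int_gap => /measurable_EFinP.
- by move=> w; rewrite subr_ge0 (ip_le_orbit_support ipP actP).
move=> w /existsNP [v /not_implyP [Tv /eqP xv]].
by rewrite subr_gt0 (ip_lt_orbit_support ipP actP tanT Tv xv).
Qed.

Lemma Rintegral_ip_model (eps : Omega -> M) (sigma : R) : 0 < sigma ->
  (forall w, X w = t0 + sigma *: eps w) ->
  (\int[P]_w (ip (eps w) t0)%:E = 0)%E -> \int[P]_w ip (X w) t0 = `|t0| ^+ 2.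
Proof.
move=> sigma0 Xeps eps_mean.
have ip_eps w : ip (eps w) t0 = sigma^-1 * ip (X w) t0 + - (sigma^-1 * `|t0| ^+ 2).
  by rewrite Xeps (ipDl ipP) (ipZl ipP) (ip_sqr_norm ipP) mulrDr mulKf ?gt_eqF //; lra.
have : \int[P]_w ip (eps w) t0 = 0 by rewrite /Rintegral eps_mean.
under eq_Rintegral do rewrite ip_eps.
rewrite RintegralZlD ?Rintegral_cst_probability //; [|exact: integrable_ip|exact: integrable_cst].
move/eqP; rewrite -mulrBr mulf_eq0 invr_eq0 gt_eqF //= subr_eq0.
by move/eqP.
Qed.
End FrechetFunction.

Unset Implicit Arguments. Set Strict Implicit.

Theorem mainTheorem11 (R : realType) (M : completeNormedModType R)
  (ip : M -> M -> R)
  (G : Type) (mul : G -> G -> G) (one : G) (inv : G -> G) (act : G -> M -> M)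
  (d : measure_display) (Omega : measurableType d) (P : probability Omega R)
  (X eps : Omega -> M) (t0 : M) (sigma : R) (T : set M) :
  is_inner_product ip ->
  linear_isometric_group_action mul one inv act ->
  t0 != 0 ->
  0 < sigma ->
  (forall w, X w = t0 + sigma *: eps w) ->
  borel_measurable X ->
  (forall h : M, (\int[P]_w (ip (eps w) h)%:E = 0)%E) ->
  (\int[P]_w (`|X w| ^+ 2)%:E < +oo)%E ->
  C1_submanifold (group_orbit act t0) ->
  tangent_space (group_orbit act t0) t0 T ->
  ((0 < P [set w | ~ orth ip T (X w)])%E <->
   (0 < P [set w | ~ orth ip T (eps w)])%E) /\
  ((0 < P [set w | ~ orth ip T (X w)])%E ->
   ~ is_frechet_mean P act X t0).
Proof.
(* The chart provided by the tangent-space hypothesis is all that is used. *)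
move=> ipP actP t0_neq0 sigma0 Xeps mX eps_mean X_L2 _ tanT.
have t0_orth := tangent_orth_base ipP actP tanT.
have notorth_X_eps : [set w | ~ orth ip T (X w)] = [set w | ~ orth ip T (eps w)].
  by apply/funext => w; rewrite /= Xeps (orth_shift _ ipP t0_orth) // gt_eqF.
split=> [|notorth_pos]; first by rewrite notorth_X_eps.
apply: (not_frechet_mean_of_lt ipP actP mX X_L2 t0_neq0).
rewrite -(Rintegral_ip_model ipP mX X_L2 sigma0 Xeps (eps_mean t0)).
exact: (Rintegral_ip_lt_orbit_support ipP actP mX X_L2 tanT notorth_pos).
Qed.
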